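(* Let $G=G_1\ast_C G_2$ be an amalgamated free product over an infinite cyclic subgroup $C$. If $G_2$ is abelian, assume furthermore that $G_2=K\oplus L$ with $C\leqslant K$ and $|L|>2$. Then $G$ has a nontrivial automorphism whose restriction to $G_1$ is the identity. *)

From Stdlib Require Import ZArith.

Record Group := {
  gcar :> Type;
  gmul : gcar -> gcar -> gcar;
  gone : gcar;
  ginv : gcar -> gcar;
  gmulA : forall x y z, gmul x (gmul y z) = gmul (gmul x y) z;
  gmul1 : forall x, gmul gone x = x;
  gmulV : forall x, gmul (ginv x) x = gone
}.

Arguments gmul {g}.
Arguments gone {g}.
Arguments ginv {g}.

Record Hom (G H : Group) := {
  hfun :> G -> H;
  hmul : forall x y : G, hfun (gmul x y) = gmul (hfun x) (hfun y)
}.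

Definition Zgroup : Group :=
  {| gcar := Z; gmul := Z.add; gone := 0%Z; ginv := Z.opp;
     gmulA := Z.add_assoc; gmul1 := Z.add_0_l; gmulV := Z.add_opp_diag_l |}.

Definition injective {A B : Type} (f : A -> B) := forall x y, f x = f y -> x = y.

(* G together with i1 : G1 -> G, i2 : G2 -> G is the amalgamated free product
   G1 *_C G2, where C is identified (via j1, j2) with subgroups of G1 and G2:
   the universal property of the pushout of j1 and j2. *)
Definition IsAmalgam (C G1 G2 G : Group) (j1 : Hom C G1) (j2 : Hom C G2)
  (i1 : Hom G1 G) (i2 : Hom G2 G) : Prop :=
  (forall c : C, i1 (j1 c) = i2 (j2 c)) /\
  (forall (H : Group) (f1 : Hom G1 H) (f2 : Hom G2 H),
     (forall c : C, f1 (j1 c) = f2 (j2 c)) ->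
     exists f : Hom G H,
       (forall g : G1, f (i1 g) = f1 g) /\ (forall g : G2, f (i2 g) = f2 g) /\
       (forall f' : Hom G H,
          (forall g : G1, f' (i1 g) = f1 g) -> (forall g : G2, f' (i2 g) = f2 g) ->
          forall x : G, f' x = f x)).

Definition abelian (G : Group) := forall x y : G, gmul x y = gmul y x.

Definition subgroup (G : Group) (S : G -> Prop) :=
  S gone /\ (forall x y, S x -> S y -> S (gmul x y)) /\ (forall x, S x -> S (ginv x)).

Definition direct_sum (G : Group) (K L : G -> Prop) :=
  subgroup G K /\ subgroup G L /\
  forall g : G, exists k l, K k /\ L l /\ g = gmul k l /\
    forall k' l', K k' -> L l' -> g = gmul k' l' -> k' = k /\ l' = l.

Definition card_gt2 {A : Type} (L : A -> Prop) :=
  exists a b c, L a /\ L b /\ L c /\ a <> b /\ a <> c /\ b <> c.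

Definition automorphism (G : Group) (phi : Hom G G) :=
  exists psi : G -> G, (forall x, psi (phi x) = x) /\ (forall x, phi (psi x) = x).

From mathcomp Require classical_sets.
From Stdlib Require Import ZArith Classical ClassicalEpsilon ProofIrrelevance
  FunctionalExtensionality PropExtensionality.

(* Since [G] is a pushout, an automorphism of [G2] fixing [C] pointwise extends by
   the identity on [G1] to an automorphism of [G]; it is nontrivial as soon as it
   moves an element of [G2] visibly in some group receiving compatible maps from
   [G1] and [G2].  If [G2] is not abelian, take conjugation by an element that
   centralizes the cyclic group [C] but is not central; it is visible because [G2]
   embeds in [G] (it acts faithfully on coset normal forms).  If [G2 = K (+) L] is
   abelian with [C <= K], twist [L] by a nontrivial involutive automorphism and
   detect it through the projection onto [L], which kills [C]: inversion if [L] has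
   an element of order > 2, otherwise a transvection of the [F_2]-space [L] of
   dimension >= 2, whose hyperplane comes from Zorn's lemma. *)

Section GroupLaws.
Variable G : Group.

Lemma gmulrV (x : G) : gmul x (ginv x) = gone.
Proof.
transitivity (gmul (gmul (ginv (ginv x)) (ginv x)) (gmul x (ginv x))).
- rewrite gmulV, gmul1. reflexivity.
- rewrite <- gmulA, (gmulA G (ginv x) x), gmulV, gmul1. apply gmulV.
Qed.

Lemma gmulr1 (x : G) : gmul x gone = x.
Proof. rewrite <- (gmulV G x), gmulA, gmulrV, gmul1. reflexivity. Qed.

Lemma gmul_cancel_l (a x y : G) : gmul a x = gmul a y -> x = y.
Proof.
intro E. rewrite <- (gmul1 G x), <- (gmul1 G y), <- (gmulV G a), <- !gmulA, E.
reflexivity.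
Qed.

Lemma gmul_cancel_r (a x y : G) : gmul x a = gmul y a -> x = y.
Proof.
intro E. rewrite <- (gmulr1 x), <- (gmulr1 y), <- (gmulrV a), !gmulA, E.
reflexivity.
Qed.

Lemma ginvK (x : G) : ginv (ginv x) = x.
Proof. apply (gmul_cancel_r (ginv x)). rewrite gmulV, gmulrV. reflexivity. Qed.

Lemma ginvM (x y : G) : ginv (gmul x y) = gmul (ginv y) (ginv x).
Proof.
apply (gmul_cancel_r (gmul x y)).
rewrite gmulV, gmulA, <- (gmulA G (ginv y)), gmulV, gmulr1, gmulV. reflexivity.
Qed.

Lemma gmul_sqK (x y : G) : gmul x x = gone -> gmul x (gmul x y) = y.
Proof. intro E. rewrite gmulA, E, gmul1. reflexivity. Qed.

Lemma gmulACA (Gab : abelian G) (a b c d : G) :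
  gmul (gmul a b) (gmul c d) = gmul (gmul a c) (gmul b d).
Proof. rewrite <- !gmulA. f_equal. rewrite !gmulA. f_equal. apply Gab. Qed.

End GroupLaws.

Lemma hom1 (G H : Group) (h : Hom G H) : h gone = gone.
Proof.
apply (gmul_cancel_l H (h gone)). rewrite <- hmul, gmul1, gmulr1. reflexivity.
Qed.

Definition hom_id (G : Group) : Hom G G :=
  Build_Hom G G (fun x => x) (fun _ _ => eq_refl).

Definition hom_triv (G H : Group) : Hom G H :=
  Build_Hom G H (fun _ => gone) (fun _ _ => eq_sym (gmul1 H gone)).

Definition hom_comp (A B C : Group) (g : Hom B C) (f : Hom A B) : Hom A C.
Proof.
refine (Build_Hom A C (fun x => g (f x)) _).
intros x y. rewrite !hmul. reflexivity.
Defined.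

Definition conj_hom (G : Group) (a : G) : Hom G G.
Proof.
refine (Build_Hom G G (fun g => gmul (gmul a g) (ginv a)) _).
intros x y. rewrite <- !gmulA. f_equal.
rewrite (gmulA G (ginv a) a), gmulV, gmul1, !gmulA. reflexivity.
Defined.

Lemma conj_homK (G : Group) (a g : G) : conj_hom G (ginv a) (conj_hom G a g) = g.
Proof.
simpl. rewrite ginvK, <- !gmulA, gmulV, gmulr1, !gmulA, gmulV, gmul1. reflexivity.
Qed.

Lemma conj_hom_id (G : Group) (a x : G) : gmul a x = gmul x a -> conj_hom G a x = x.
Proof. intro E. simpl. rewrite E, <- gmulA, gmulrV, gmulr1. reflexivity. Qed.

(* Permutations, with their inverse carried along so that [Sym X] is a group. *)
Record Perm (X : Type) := {
  perm_fun : X -> X;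
  perm_inv : X -> X;
  perm_funK : forall x, perm_fun (perm_inv x) = x;
  perm_invK : forall x, perm_inv (perm_fun x) = x
}.
Arguments perm_fun {X}.
Arguments perm_inv {X}.

Lemma perm_ext (X : Type) (p q : Perm X) : (forall x, perm_fun p x = perm_fun q x) -> p = q.
Proof.
intro E. apply functional_extensionality in E.
destruct p as [f g fK gK], q as [f' g' fK' gK']. simpl in E. subst f'.
assert (g = g') as <-.
{ apply functional_extensionality. intro x. rewrite <- (fK' x) at 1. apply gK. }
f_equal; apply proof_irrelevance.
Qed.

Definition perm_comp (X : Type) (p q : Perm X) : Perm X.
Proof.
refine (Build_Perm X (fun x => perm_fun p (perm_fun q x))
                     (fun x => perm_inv q (perm_inv p x)) _ _);
  intro x; rewrite ?perm_funK, ?perm_invK; reflexivity.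
Defined.

Definition Sym (X : Type) : Group.
Proof.
refine (Build_Group (Perm X) (perm_comp X)
  (Build_Perm X (fun x => x) (fun x => x) (fun _ => eq_refl) (fun _ => eq_refl))
  (fun p => Build_Perm X (perm_inv p) (perm_fun p) (perm_invK X p) (perm_funK X p))
  _ _ _); intros; apply perm_ext; intro; simpl; rewrite ?perm_invK; reflexivity.
Defined.

Definition is_action (A : Group) (X : Type) (act : A -> X -> X) : Prop :=
  (forall x, act gone x = x) /\ (forall a b x, act a (act b x) = act (gmul a b) x).

Definition perm_of_action (A : Group) (X : Type) (act : A -> X -> X)
  (Hact : is_action A X act) : Hom A (Sym X).
Proof.
destruct Hact as [act1 actM].
assert (actK : forall a x, act (ginv a) (act a x) = x /\ act a (act (ginv a) x) = x).
{ intros a x. rewrite !actM, gmulV, gmulrV. auto. }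
refine (Build_Hom A (Sym X)
  (fun a => Build_Perm X (act a) (act (ginv a))
              (fun x => proj2 (actK a x)) (fun x => proj1 (actK a x))) _).
intros a b. apply perm_ext. intro x. simpl. symmetry. apply actM.
Defined.

Lemma perm_of_actionE (A : Group) (X : Type) (act : A -> X -> X) Hact a x :
  perm_fun (perm_of_action A X act Hact a) x = act a x.
Proof. destruct Hact. reflexivity. Qed.

Lemma is_action_fst (A : Group) (Y S : Type) (act : A -> Y -> Y) :
  is_action A Y act -> is_action A (Y * S) (fun a w => (act a (fst w), snd w)).
Proof.
intros [act1 actM]. split.
- intros [y s]. simpl. rewrite act1. reflexivity.
- intros a b [y s]. simpl. rewrite actM. reflexivity.
Qed.

Lemma is_action_transport (A : Group) (X Y : Type) (e : X -> Y) (e' : Y -> X)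
  (act : A -> Y -> Y) :
  (forall x, e' (e x) = x) -> (forall y, e (e' y) = y) ->
  is_action A Y act -> is_action A X (fun a x => e' (act a (e x))).
Proof.
intros eK e'K [act1 actM]. split.
- intro x. rewrite act1. apply eK.
- intros a b x. rewrite e'K, actM. reflexivity.
Qed.

Section CosetNormalForm.
Variables (C A : Group) (j : Hom C A).

Definition coset_rep (g : A) : A :=
  epsilon (inhabits gone) (fun x => exists c, x = gmul (j c) g).

Definition coset_coord (g : A) : C :=
  epsilon (inhabits gone) (fun c => g = gmul (j c) (coset_rep g)).

Lemma coset_rep_spec (g : A) : exists c, coset_rep g = gmul (j c) g.
Proof.
apply (epsilon_spec (inhabits gone) (fun x => exists c, x = gmul (j c) g)).
exists g, gone. rewrite hom1, gmul1. reflexivity.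
Qed.

Lemma coset_decomp (g : A) : g = gmul (j (coset_coord g)) (coset_rep g).
Proof.
apply (epsilon_spec (inhabits gone) (fun c => g = gmul (j c) (coset_rep g))).
destruct (coset_rep_spec g) as [c ->]. exists (ginv c).
rewrite gmulA, <- hmul, gmulV, hom1, gmul1. reflexivity.
Qed.

Lemma coset_rep_jmul (c : C) (g : A) : coset_rep (gmul (j c) g) = coset_rep g.
Proof.
unfold coset_rep. f_equal. apply functional_extensionality. intro x.
apply propositional_extensionality. split.
- intros [c' ->]. exists (gmul c' c). rewrite hmul, gmulA. reflexivity.
- intros [c' ->]. exists (gmul c' (ginv c)).
  rewrite gmulA, <- hmul, <- gmulA, gmulV, gmulr1. reflexivity.
Qed.

Lemma coset_rep_idem (g : A) : coset_rep (coset_rep g) = coset_rep g.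
Proof. destruct (coset_rep_spec g) as [c E]. rewrite E at 1. apply coset_rep_jmul. Qed.

Definition coset_reps : Type := {x : A | coset_rep x = x}.

Definition coset_split (g : A) : C * coset_reps :=
  (coset_coord g, exist _ (coset_rep g) (coset_rep_idem g)).

Definition coset_join (w : C * coset_reps) : A := gmul (j (fst w)) (proj1_sig (snd w)).

Lemma coset_join_split (g : A) : coset_join (coset_split g) = g.
Proof. symmetry. apply coset_decomp. Qed.

Lemma coset_split_join (j_inj : injective j) (w : C * coset_reps) :
  coset_split (coset_join w) = w.
Proof.
destruct w as [c [x xrep]]. unfold coset_split, coset_join. simpl.
assert (Erep : coset_rep (gmul (j c) x) = x) by (rewrite coset_rep_jmul; exact xrep).
f_equal.
- apply j_inj, (gmul_cancel_r A x). symmetry.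
  rewrite (coset_decomp (gmul (j c) x)) at 1. rewrite Erep. reflexivity.
- apply subset_eq_compat. exact Erep.
Qed.

Definition coset_act (a : A) (w : C * coset_reps) : C * coset_reps :=
  coset_split (gmul a (coset_join w)).

Lemma coset_act_is_action (j_inj : injective j) : is_action A _ coset_act.
Proof.
apply (is_action_transport A _ A coset_join coset_split (@gmul A)).
- exact (coset_split_join j_inj).
- exact coset_join_split.
- split; [apply gmul1 | intros; apply gmulA].
Qed.

Lemma coset_act_j (j_inj : injective j) (c n : C) (x : coset_reps) :
  coset_act (j c) (n, x) = (gmul c n, x).
Proof.
unfold coset_act, coset_join. simpl.
rewrite gmulA, <- hmul. apply (coset_split_join j_inj (gmul c n, x)).
Qed.

End CosetNormalForm.

Arguments coset_reps {C A} j.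
Arguments coset_split {C A} j g.
Arguments coset_act {C A} j a w.

(* [C * (C\G1) * (C\G2)] is in bijection with both [G1 * (C\G2)] and
   [G2 * (C\G1)]; left multiplication by [G1] and by [G2] then agree on [C], and
   [G2] acts faithfully. *)
Lemma compatible_embedding_r (C G1 G2 : Group) (j1 : Hom C G1) (j2 : Hom C G2) :
  injective j1 -> injective j2 ->
  exists (H : Group) (f1 : Hom G1 H) (f2 : Hom G2 H),
    (forall c, f1 (j1 c) = f2 (j2 c)) /\ injective f2.
Proof.
intros j1_inj j2_inj.
set (swap := fun w : C * coset_reps j1 * coset_reps j2 =>
               let '((c, x), y) := w in ((c, y), x)).
set (swap' := fun w : C * coset_reps j2 * coset_reps j1 =>
                let '((c, y), x) := w in ((c, x), y)).
assert (swapK : forall w, swap' (swap w) = w) by (intros [[c x] y]; reflexivity).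
assert (swap'K : forall w, swap (swap' w) = w) by (intros [[c y] x]; reflexivity).
pose proof (is_action_fst G1 _ (coset_reps j2) _ (coset_act_is_action C G1 j1 j1_inj))
  as act1.
pose proof (is_action_transport G2 _ _ swap swap' _ swapK swap'K
  (is_action_fst G2 _ (coset_reps j1) _ (coset_act_is_action C G2 j2 j2_inj)))
  as act2.
exists (Sym (C * coset_reps j1 * coset_reps j2)),
  (perm_of_action _ _ _ act1), (perm_of_action _ _ _ act2).
split.
- intro c. apply perm_ext. intros [[n x] y]. rewrite !perm_of_actionE.
  cbv beta iota delta [swap swap' fst snd].
  rewrite !coset_act_j by assumption. reflexivity.
- intros b b' E.
  set (w0 := swap' (coset_split j2 gone, snd (coset_split j1 gone))).
  assert (Ew0 : perm_fun (perm_of_action _ _ _ act2 b) w0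
              = perm_fun (perm_of_action _ _ _ act2 b') w0) by (rewrite E; reflexivity).
  rewrite !perm_of_actionE in Ew0. unfold w0 in Ew0. rewrite swap'K in Ew0.
  apply (f_equal (fun w => coset_join C G2 j2 (fst (swap w)))) in Ew0.
  rewrite !swap'K in Ew0. simpl in Ew0. unfold coset_act in Ew0.
  rewrite !coset_join_split, !gmulr1 in Ew0. exact Ew0.
Qed.

Lemma zorn_chain_union (T : Type) (P : (T -> Prop) -> Prop) :
  (forall F : (T -> Prop) -> Prop, (forall X, F X -> P X) ->
    (forall X Y, F X -> F Y -> (forall t, X t -> Y t) \/ (forall t, Y t -> X t)) ->
    P (fun t => exists2 X, F X & X t)) ->
  exists M, P M /\ forall B, P B -> (forall t, M t -> B t) -> forall t, B t -> M t.
Proof.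
intro Hchain.
destruct (@classical_sets.Zorn_bigcup T P) as [M [PM Mmax]].
- intros F FP Ftot. exact (Hchain F FP Ftot).
- exists M. split; [exact PM|]. intros B PB MB t Bt.
  apply NNPP. intro nMt. apply (Mmax B); [|exact PB].
  split; [exact MB|]. intro BM. exact (nMt (BM t Bt)).
Qed.

Definition involutive_aut_on (G : Group) (L : G -> Prop) (sg : G -> G) : Prop :=
  (forall l, L l -> L (sg l)) /\
  (forall l l', L l -> L l' -> sg (gmul l l') = gmul (sg l) (sg l')) /\
  (forall l, L l -> sg (sg l) = l).

Section Exponent2.
Variables (G : Group) (L : G -> Prop) (l1 l2 : G).
Hypotheses (Gab : abelian G) (L1 : L gone)
  (LM : forall x y, L x -> L y -> L (gmul x y)) (sq : forall l, L l -> gmul l l = gone)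
  (Ll1 : L l1) (Ll2 : L l2) (l2_ne1 : l2 <> gone) (l2_nel1 : l2 <> l1).

Definition avoids_l2 (S : G -> Prop) : Prop :=
  (forall t, S t -> L t) /\ (forall x y, S x -> S y -> S (gmul x y)) /\
  (forall x, S x -> S (gmul x l1)) /\ ~ S l2.

Lemma exists_maximal_avoids_l2 :
  exists M, avoids_l2 M /\
    forall B, avoids_l2 B -> (forall t, M t -> B t) -> forall t, B t -> M t.
Proof.
apply zorn_chain_union. intros F FP Ftot. split; [|split; [|split]].
- intros t [X FX Xt]. exact (proj1 (FP X FX) t Xt).
- intros x y [X FX Xx] [Y FY Yy].
  destruct (Ftot X Y FX FY) as [XY | YX].
  + exists Y; [exact FY|]. apply (FP Y FY); auto.
  + exists X; [exact FX|]. apply (FP X FX); auto.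
- intros x [X FX Xx]. exists X; [exact FX|]. apply (FP X FX), Xx.
- intros [X FX Xl2]. exact (proj2 (proj2 (proj2 (FP X FX))) Xl2).
Qed.

Section MaximalAvoidsL2.
Variable M : G -> Prop.
Hypotheses (avoidsM : avoids_l2 M)
  (Mmax : forall B, avoids_l2 B -> (forall t, M t -> B t) -> forall t, B t -> M t).

Lemma maximal_avoids_l2_one : M gone.
Proof.
destruct avoidsM as [ML [MM _]].
assert (avoids_B0 : avoids_l2 (fun t => t = gone \/ t = l1)).
{ split; [|split; [|split]].
  - intros t [-> | ->]; assumption.
  - intros x y [-> | ->] [-> | ->]; rewrite ?gmul1, ?gmulr1, ?sq; auto.
  - intros x [-> | ->]; rewrite ?gmul1, ?sq; auto.
  - intros [E | E]; contradiction. }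
apply NNPP. intro nM1.
assert (Mempty : forall t, ~ M t).
{ intros t Mt. apply nM1. rewrite <- (sq t) by auto. auto. }
apply nM1, (Mmax _ avoids_B0 (fun t Mt => False_ind _ (Mempty t Mt))).
left; reflexivity.
Qed.

(* [M] is a subgroup of index 2 in [L] containing [l1] but not [l2]: otherwise
   [M \cup l M] would be larger. *)
Lemma maximal_avoids_l2_cover (l : G) : L l -> M l \/ M (gmul l l2).
Proof.
destruct avoidsM as [ML [MM [Ml1 Ml2]]].
intro Ll. apply NNPP. intro N. apply not_or_and in N. destruct N as [nMl nMll2].
set (B := fun t => M t \/ exists m, M m /\ t = gmul l m).
assert (avoidsB : avoids_l2 B).
{ unfold B. split; [|split; [|split]].
  - intros t [Mt | [m [Mm ->]]]; auto.
  - intros x y [Mx | [m [Mm ->]]] [My | [m' [Mm' ->]]].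
    + left. auto.
    + right. exists (gmul x m'). split; [auto|].
      rewrite !gmulA, (Gab x l). reflexivity.
    + right. exists (gmul m y). split; [auto | symmetry; apply gmulA].
    + left. rewrite gmulACA, sq, gmul1 by auto. auto.
  - intros x [Mx | [m [Mm ->]]]; [left; auto|].
    right. exists (gmul m l1). split; [auto | symmetry; apply gmulA].
  - intros [Ml2' | [m [Mm E]]]; [contradiction|].
    apply nMll2. rewrite E, gmul_sqK by auto. exact Mm. }
apply nMl, (Mmax B avoidsB); [intros t Mt; left; exact Mt|].
right. exists gone. split; [exact maximal_avoids_l2_one | symmetry; apply gmulr1].
Qed.

End MaximalAvoidsL2.

Lemma exponent2_transvection (l1_ne1 : l1 <> gone) :
  exists sg, involutive_aut_on G L sg /\ sg l2 <> l2.
Proof.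
destruct exists_maximal_avoids_l2 as [M [avoidsM Mmax]].
pose proof (maximal_avoids_l2_cover M avoidsM Mmax) as Mcover.
destruct avoidsM as [_ [MM [Ml1 Ml2]]].
assert (Ml1K : forall x, L x -> M (gmul x l1) -> M x).
{ intros x Lx Mxl1. rewrite <- (gmulr1 G x), <- (sq l1), gmulA by exact Ll1. auto. }
exists (fun l => if excluded_middle_informative (M l) then l else gmul l l1).
split; [split; [|split] |].
- intros l Ll. destruct (excluded_middle_informative (M l)); auto.
- intros x y Lx Ly.
  destruct (excluded_middle_informative (M x)) as [Mx | nMx],
    (excluded_middle_informative (M y)) as [My | nMy],
    (excluded_middle_informative (M (gmul x y))) as [Mxy | nMxy].
  + reflexivity.
  + exfalso. auto.
  + exfalso. apply nMy. rewrite <- (gmul_sqK G x y) by auto. auto.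
  + symmetry. apply gmulA.
  + exfalso. apply nMx. rewrite <- (gmul_sqK G y x), (Gab y x) by auto. auto.
  + rewrite <- !gmulA, (Gab l1 y). reflexivity.
  + rewrite gmulACA, (sq l1), gmulr1 by auto. reflexivity.
  + exfalso. apply nMxy.
    destruct (Mcover x Lx) as [|Mxl2]; [contradiction|].
    destruct (Mcover y Ly) as [|Myl2]; [contradiction|].
    rewrite <- (gmulr1 G (gmul x y)), <- (sq l2), gmulACA by auto. auto.
- intros l Ll. destruct (excluded_middle_informative (M l)) as [Ml | nMl].
  + destruct (excluded_middle_informative (M l)); [reflexivity | contradiction].
  + destruct (excluded_middle_informative (M (gmul l l1))) as [Mll1 | _].
    * exfalso. exact (nMl (Ml1K l Ll Mll1)).
    * rewrite <- gmulA, sq, gmulr1 by exact Ll1. reflexivity.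
- destruct (excluded_middle_informative (M l2)) as [|_]; [contradiction|].
  intro E. apply l1_ne1, (gmul_cancel_l G l2). rewrite gmulr1. exact E.
Qed.

End Exponent2.

Lemma abelian_nontrivial_involution (G : Group) (L : G -> Prop) :
  abelian G -> subgroup G L -> card_gt2 L ->
  exists sg, involutive_aut_on G L sg /\ exists l0, L l0 /\ sg l0 <> l0.
Proof.
intros Gab [L1 [LM LV]] [a [b [c [La [Lb [Lc [ab [ac bc]]]]]]]].
destruct (classic (exists l, L l /\ gmul l l <> gone)) as [[l [Ll Hl]] | Hexp2].
- exists ginv. split; [split; [|split] |].
  + exact LV.
  + intros x y _ _. rewrite ginvM. apply Gab.
  + intros x _. apply ginvK.
  + exists l. split; [exact Ll|]. intro E. apply Hl. rewrite <- E at 1. apply gmulV.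
- assert (sq : forall l, L l -> gmul l l = gone).
  { intros l Ll. apply NNPP. intro N. apply Hexp2. eauto. }
  assert (Hl12 : exists l1 l2, L l1 /\ L l2 /\ l1 <> gone /\ l2 <> gone /\ l2 <> l1).
  { destruct (classic (a = gone)) as [-> | na].
    - exists b, c. auto.
    - destruct (classic (b = gone)) as [-> | nb].
      + exists a, c. auto.
      + exists a, b. auto. }
  destruct Hl12 as [l1 [l2 [Ll1 [Ll2 [l1_ne1 [l2_ne1 l2_nel1]]]]]].
  destruct (exponent2_transvection G L l1 l2 Gab L1 LM sq Ll1 Ll2 l2_ne1 l2_nel1 l1_ne1)
    as [sg [Hsg nsg]].
  exists sg. split; [exact Hsg|]. exists l2. auto.
Qed.

Section DirectSum.
Variables (G : Group) (K L : G -> Prop).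
Hypotheses (Gab : abelian G) (GKL : direct_sum G K L).

Definition ds_split (g : G) : G * G :=
  epsilon (inhabits (g, g)) (fun p => K (fst p) /\ L (snd p) /\ g = gmul (fst p) (snd p)).

Lemma ds_split_spec (g : G) :
  K (fst (ds_split g)) /\ L (snd (ds_split g)) /\ g = gmul (fst (ds_split g)) (snd (ds_split g)).
Proof.
apply (epsilon_spec (inhabits (g, g))
  (fun p => K (fst p) /\ L (snd p) /\ g = gmul (fst p) (snd p))).
destruct GKL as [_ [_ D]]. destruct (D g) as [k [l [Hk [Hl [E _]]]]].
exists (k, l). auto.
Qed.

Lemma ds_split_mul (k l : G) : K k -> L l -> ds_split (gmul k l) = (k, l).
Proof.
intros Hk Hl. destruct GKL as [_ [_ D]].
destruct (D (gmul k l)) as [k0 [l0 [_ [_ [_ U]]]]].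
destruct (U k l Hk Hl eq_refl) as [<- <-].
destruct (ds_split_spec (gmul k l)) as [Hk' [Hl' E]].
destruct (U _ _ Hk' Hl' E) as [Ek El].
rewrite (surjective_pairing (ds_split _)), Ek, El. reflexivity.
Qed.

Lemma ds_splitM (g h : G) :
  ds_split (gmul g h) = (gmul (fst (ds_split g)) (fst (ds_split h)),
                         gmul (snd (ds_split g)) (snd (ds_split h))).
Proof.
destruct GKL as [[_ [KM _]] [[_ [LM _]] _]].
destruct (ds_split_spec g) as [Kg [Lg Eg]], (ds_split_spec h) as [Kh [Lh Eh]].
rewrite Eg at 1. rewrite Eh at 1. rewrite gmulACA by exact Gab.
apply ds_split_mul; auto.
Qed.

Definition ds_proj_L : Hom G G.
Proof.
refine (Build_Hom G G (fun g => snd (ds_split g)) _).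
intros g h. rewrite ds_splitM. reflexivity.
Defined.

Variable sg : G -> G.
Hypotheses (sgL : forall l, L l -> L (sg l))
  (sgM : forall l l', L l -> L l' -> sg (gmul l l') = gmul (sg l) (sg l'))
  (sgK : forall l, L l -> sg (sg l) = l).

Lemma sg1 : sg gone = gone.
Proof.
destruct GKL as [_ [[L1 _] _]].
apply (gmul_cancel_l G (sg gone)). rewrite <- sgM, !gmulr1 by exact L1. reflexivity.
Qed.

Definition ds_twist : Hom G G.
Proof.
refine (Build_Hom G G (fun g => gmul (fst (ds_split g)) (sg (snd (ds_split g)))) _).
intros g h. rewrite ds_splitM. simpl.
destruct (ds_split_spec g) as [_ [Lg _]], (ds_split_spec h) as [_ [Lh _]].
rewrite sgM by assumption. apply gmulACA, Gab.
Defined.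

Lemma ds_twistK (g : G) : ds_twist (ds_twist g) = g.
Proof.
simpl. destruct (ds_split_spec g) as [Kg [Lg Eg]].
rewrite ds_split_mul by auto. simpl. rewrite sgK by exact Lg. symmetry. exact Eg.
Qed.

Lemma ds_twist_K (k : G) : K k -> ds_twist k = k.
Proof.
destruct GKL as [_ [[L1 _] _]]. intro Hk. simpl.
rewrite <- (gmulr1 G k) at 1 2. rewrite ds_split_mul by assumption. simpl.
rewrite sg1. apply gmulr1.
Qed.

Lemma ds_proj_L_twist (l : G) : L l -> ds_proj_L (ds_twist l) = sg l.
Proof.
destruct GKL as [[K1 _] _]. intro Hl. simpl.
rewrite <- (gmul1 G l) at 1 2. rewrite (ds_split_mul gone l) by assumption. simpl.
rewrite ds_split_mul by auto. reflexivity.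
Qed.

End DirectSum.

Lemma exists_centralizing_noncentral (C G : Group) (j : Hom C G) :
  abelian C -> ~ abelian G ->
  exists a b : G, (forall c, gmul a (j c) = gmul (j c) a) /\ gmul a b <> gmul b a.
Proof.
intros Cab Gnab.
destruct (classic (exists g c, gmul g (j c) <> gmul (j c) g)) as [[g [c N]] | N].
- exists (j c), g. split.
  + intro c'. rewrite <- !hmul, Cab. reflexivity.
  + intro E. exact (N (eq_sym E)).
- apply not_all_ex_not in Gnab as [a Gnab].
  apply not_all_ex_not in Gnab as [b nab].
  exists a, b. split; [|exact nab].
  intro c. apply NNPP. intro N'. apply N. exists a, c. exact N'.
Qed.

Definition nontrivial_aut_fixing (G1 G : Group) (i1 : Hom G1 G) : Prop :=
  exists phi : Hom G G, automorphism G phi /\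
    (exists x : G, phi x <> x) /\ (forall g : G1, phi (i1 g) = i1 g).

Section Amalgam.
Variables (C G1 G2 G : Group) (j1 : Hom C G1) (j2 : Hom C G2)
  (i1 : Hom G1 G) (i2 : Hom G2 G).
Hypothesis amalgam : IsAmalgam C G1 G2 G j1 j2 i1 i2.

Lemma amalgam_hom_ext (H : Group) (f f' : Hom G H) :
  (forall g, f (i1 g) = f' (i1 g)) -> (forall g, f (i2 g) = f' (i2 g)) ->
  forall x, f x = f' x.
Proof.
intros E1 E2 x. destruct amalgam as [ij Hu].
destruct (Hu H (hom_comp _ _ _ f i1) (hom_comp _ _ _ f i2)) as [F [_ [_ Funiq]]].
{ intro c. simpl. rewrite ij. reflexivity. }
rewrite (Funiq f), (Funiq f'); try reflexivity; intro g; simpl; auto.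
Qed.

Lemma amalgam_lift (al : Hom G2 G2) : (forall c, al (j2 c) = j2 c) ->
  exists phi : Hom G G,
    (forall g, phi (i1 g) = i1 g) /\ (forall g, phi (i2 g) = i2 (al g)).
Proof.
intro alC. destruct amalgam as [ij Hu].
destruct (Hu G i1 (hom_comp _ _ _ i2 al)) as [phi [phi1 [phi2 _]]].
{ intro c. simpl. rewrite alC. apply ij. }
exists phi. auto.
Qed.

Lemma amalgam_factor_through (H : Group) (f1 : Hom G1 H) (f2 : Hom G2 H) :
  (forall c, f1 (j1 c) = f2 (j2 c)) -> forall x y, i2 x = i2 y -> f2 x = f2 y.
Proof.
intros Hf x y E. destruct amalgam as [_ Hu].
destruct (Hu H f1 f2 Hf) as [F [_ [F2 _]]].
rewrite <- !F2, E. reflexivity.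
Qed.

Lemma amalgam_extend_aut (al be : Hom G2 G2) (H : Group) (f1 : Hom G1 H)
  (f2 : Hom G2 H) (g0 : G2) :
  (forall c, al (j2 c) = j2 c) -> (forall g, be (al g) = g) -> (forall g, al (be g) = g) ->
  (forall c, f1 (j1 c) = f2 (j2 c)) -> f2 (al g0) <> f2 g0 ->
  nontrivial_aut_fixing G1 G i1.
Proof.
intros alC beK alK Hf moved.
assert (beC : forall c, be (j2 c) = j2 c).
{ intro c. rewrite <- (alC c) at 1. apply beK. }
destruct (amalgam_lift al alC) as [phi [phi1 phi2]].
destruct (amalgam_lift be beC) as [psi [psi1 psi2]].
exists phi. split; [|split].
- exists psi. split.
  + apply (amalgam_hom_ext G (hom_comp _ _ _ psi phi) (hom_id G)); intro g; simpl.
    * rewrite phi1, psi1. reflexivity.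
    * rewrite phi2, psi2, beK. reflexivity.
  + apply (amalgam_hom_ext G (hom_comp _ _ _ phi psi) (hom_id G)); intro g; simpl.
    * rewrite psi1, phi1. reflexivity.
    * rewrite psi2, phi2, alK. reflexivity.
- exists (i2 g0). rewrite phi2. intro E.
  exact (moved (amalgam_factor_through H f1 f2 Hf _ _ E)).
- exact phi1.
Qed.

Lemma aut_fixing_of_direct_sum (K L : G2 -> Prop) :
  abelian G2 -> direct_sum G2 K L -> (forall c, K (j2 c)) -> card_gt2 L ->
  nontrivial_aut_fixing G1 G i1.
Proof.
intros G2ab G2KL KC L3.
pose proof G2KL as [[K1 _] [LL _]].
pose proof LL as [L1 _].
destruct (abelian_nontrivial_involution G2 L G2ab LL L3)
  as [sg [[sgL [sgM sgK]] [l0 [Ll0 moved]]]].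
set (al := ds_twist G2 K L G2ab G2KL sg sgM).
apply (amalgam_extend_aut al al G2 (hom_triv G1 G2) (ds_proj_L G2 K L G2ab G2KL) l0).
- intro c. apply ds_twist_K; auto.
- intro g. apply ds_twistK; auto.
- intro g. apply ds_twistK; auto.
- intro c. simpl. rewrite <- (gmulr1 G2 (j2 c)), ds_split_mul; auto.
- unfold al. rewrite ds_proj_L_twist by auto. simpl.
  rewrite <- (gmul1 G2 l0) at 2. rewrite ds_split_mul; auto.
Qed.

Lemma aut_fixing_of_nonabelian :
  abelian C -> injective j1 -> injective j2 -> ~ abelian G2 ->
  nontrivial_aut_fixing G1 G i1.
Proof.
intros Cab j1_inj j2_inj G2nab.
destruct (exists_centralizing_noncentral C G2 j2 Cab G2nab) as [a [b [aC nab]]].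
destruct (compatible_embedding_r C G1 G2 j1 j2 j1_inj j2_inj) as [H [f1 [f2 [Hf f2_inj]]]].
apply (amalgam_extend_aut (conj_hom G2 a) (conj_hom G2 (ginv a)) H f1 f2 b).
- intro c. apply conj_hom_id, aC.
- intro g. apply conj_homK.
- intro g. rewrite <- (ginvK G2 a) at 1. apply conj_homK.
- exact Hf.
- intro E. apply nab. pose proof (f2_inj _ _ E) as Eb. simpl in Eb.
  rewrite <- Eb at 2. rewrite <- gmulA, gmulV, gmulr1. reflexivity.
Qed.

End Amalgam.

Theorem lemma4p3 (G1 G2 G : Group) (j1 : Hom Zgroup G1) (j2 : Hom Zgroup G2)
  (i1 : Hom G1 G) (i2 : Hom G2 G) :
  injective j1 -> injective j2 ->
  IsAmalgam Zgroup G1 G2 G j1 j2 i1 i2 ->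
  (abelian G2 ->
     exists K L : G2 -> Prop, direct_sum G2 K L /\
       (forall c : Zgroup, K (j2 c)) /\ card_gt2 L) ->
  exists phi : Hom G G, automorphism G phi /\
    (exists x : G, phi x <> x) /\ (forall g : G1, phi (i1 g) = i1 g).
Proof.
intros j1_inj j2_inj amalgam Hsplit.
destruct (classic (abelian G2)) as [G2ab | G2nab].
- destruct (Hsplit G2ab) as [K [L [G2KL [KC L3]]]].
  exact (aut_fixing_of_direct_sum _ _ _ _ _ _ _ _ amalgam K L G2ab G2KL KC L3).
- apply (aut_fixing_of_nonabelian _ _ _ _ _ _ _ _ amalgam); auto.
  exact Z.add_comm.
Qed.
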